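(* Let $L$ be a frame. The map $\nu(F)=\bigcap_{a\in F}\mathfrak o(a)$ restricts to an order isomorphism from $(\mathsf R(L),\sqsubseteq)$ onto $(\{\mathrm{fit}(S)\mid S\in\mathcal S_c(L)\},\subseteq)$, with inverse $S\mapsto\{a\in L\mid S\subseteq\mathfrak o(a)\}$.
   Context: A frame is a complete lattice $L$ with $(\bigvee A)\wedge b=\bigvee_{a\in A}(a\wedge b)$, Heyting implication $\to$. A sublocale is a subset $S\subseteq L$ closed under all meets with $a\to s\in S$ for $a\in L,s\in S$; sublocales form a coframe $\mathsf{Sl}(L)$ under inclusion with joins $\bigvee_i S_i=\{\bigwedge A\mid A\subseteq\bigcup_i S_i\}$. $\mathfrak o(a)=\{a\to b\mid b\in L\}$, $\mathfrak c(a)={\uparrow}a$. $\mathrm{fit}(S)=\bigcap\{\mathfrak o(a)\mid S\subseteq\mathfrak o(a)\}$. $\mathcal S_c(L)$ is the set of joins in $\mathsf{Sl}(L)$ of closed sublocales $\mathfrak c(a)$. Filters are nonempty up-closed subsets closed under finite meets, ordered by reverse inclusion $\sqsubseteq$. $\mathsf R(L)$ is the set of regular filters, i.e. filters of the form $\{x\in L\mid\forall b\in G,\ b\vee x=1\}$ for a filter $G$ (equivalently, intersections of closed filters $\{x\mid x\vee a=1\}$). *)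

Set Implicit Arguments.

Definition pset (T : Type) := T -> Prop.
Definition subset {T} (A B : pset T) : Prop := forall x, A x -> B x.

Record cLattice := CLattice {
  car :> Type;
  le : car -> car -> Prop;
  le_refl : forall a, le a a;
  le_trans : forall a b c, le a b -> le b c -> le a c;
  le_antisym : forall a b, le a b -> le b a -> a = b;
  sup : pset car -> car;
  sup_ub : forall (A : pset car) a, A a -> le a (sup A);
  sup_least : forall (A : pset car) b, (forall a, A a -> le a b) -> le (sup A) b
}.

Arguments le {c0} _ _.
Arguments sup {c0} _.

Section Ops.
Context {L : cLattice}.
Local Notation T := (car L).

Definition inf (A : pset T) : T := sup (fun x => forall a, A a -> le x a).
Definition meet (a b : T) : T := inf (fun x => x = a \/ x = b).
Definition join (a b : T) : T := sup (fun x => x = a \/ x = b).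
Definition top : T := sup (fun _ => True).

Definition imp (a b : T) : T := sup (fun x => le (meet x a) b).

Definition is_frame : Prop :=
  forall (A : pset T) (b : T),
    meet (sup A) b = sup (fun x => exists a, A a /\ x = meet a b).

Definition sublocale (S : pset T) : Prop :=
  (forall A : pset T, subset A S -> S (inf A)) /\
  (forall a s, S s -> S (imp a s)).

Definition opn (a : T) : pset T := fun x => exists b, x = imp a b.
Definition cls (a : T) : pset T := fun x => le a x.

Definition fit (S : pset T) : pset T :=
  fun x => forall a, subset S (opn a) -> opn a x.

(** S_c(L): joins in Sl(L) of families of closed sublocales c(b), b in B,
    using the join formula  \/_i S_i = { /\ A | A <= U_i S_i }. *)
Definition Sc (S : pset T) : Prop :=
  exists B : pset T,
    S = (fun x => exists A : pset T,
            subset A (fun y => exists b, B b /\ cls b y) /\ x = inf A).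

Definition filter (F : pset T) : Prop :=
  (exists x, F x) /\
  (forall x y, F x -> le x y -> F y) /\
  (forall x y, F x -> F y -> F (meet x y)).

Definition fle (F G : pset T) : Prop := subset G F.

Definition regular (F : pset T) : Prop :=
  exists G, filter G /\ F = (fun x => forall b, G b -> join b x = top).

Definition nu (F : pset T) : pset T := fun x => forall a, F a -> opn a x.
Definition mu (S : pset T) : pset T := fun a => subset S (opn a).

Definition FitSc (T : pset T) : Prop := exists S, Sc S /\ T = fit S.

End Ops.
Arguments is_frame : clear implicits.
Arguments top : clear implicits.

(** [mu] and [nu] form an antitone Galois connection between subsets of [L]
    (the relation being "[x] lies in [o(a)]"), and [fit = nu \o mu] is its closure
    on the sublocale side.  Everything therefore reduces to one computation: for
    the join [S] of the closed sublocales [c(b)], [b] in [B], we have [S <= o(a)]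
    iff [b \/ a = 1] for every [b] in [B], i.e. [mu S] is the regular filter
    determined by [B].  The fixpoints of [mu \o nu] are then exactly the regular
    filters, those of [nu \o mu] the sets [fit S], and the connection restricts to
    an order isomorphism between them. *)
From Stdlib Require Import FunctionalExtensionality PropExtensionality.

Lemma pset_ext {T : Type} (A B : pset T) : (forall x, A x <-> B x) -> A = B.
Proof.
  intros H. extensionality x. apply propositional_extensionality, H.
Qed.

Section GaloisConnection.
Context {L : cLattice}.
Implicit Types (F G S T : pset L).

Lemma mu_antitone S T : subset S T -> subset (mu T) (mu S).
Proof. intros HS a Ha x Hx. apply Ha, HS, Hx. Qed.

Lemma nu_antitone F G : subset F G -> subset (nu G) (nu F).
Proof. intros HF x Hx a Ha. apply Hx, HF, Ha. Qed.

Lemma mu_nu_mu S : mu (nu (mu S)) = mu S.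
Proof.
  apply pset_ext. intros a. split.
  - intros H x Hx. apply H. intros c Hc. apply Hc, Hx.
  - intros H x Hx. apply Hx, H.
Qed.

Lemma nu_mu_nu F : nu (mu (nu F)) = nu F.
Proof.
  apply pset_ext. intros x. split.
  - intros H a Ha. apply H. intros y Hy. apply Hy, Ha.
  - intros H a Ha. apply Ha, H.
Qed.

Lemma fit_nu_mu S : fit S = nu (mu S).
Proof. reflexivity. Qed.

End GaloisConnection.

Section CompleteLattice.
Context {L : cLattice}.
Implicit Types (a b c x y : L) (A : pset L).

Lemma inf_lb A a : A a -> le (inf A) a.
Proof. intros Ha. apply sup_least. intros x Hx. apply Hx, Ha. Qed.

Lemma inf_glb A x : (forall a, A a -> le x a) -> le x (inf A).
Proof. intros H. apply (@sup_ub L (fun y => forall a, A a -> le y a)), H. Qed.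

Lemma inf_singleton x : inf (fun y => y = x) = x.
Proof.
  apply le_antisym.
  - apply inf_lb. reflexivity.
  - apply inf_glb. intros y ->. apply le_refl.
Qed.

Lemma meet_l a b : le (meet a b) a.
Proof. apply inf_lb. auto. Qed.

Lemma meet_r a b : le (meet a b) b.
Proof. apply inf_lb. auto. Qed.

Lemma meet_glb x a b : le x a -> le x b -> le x (meet a b).
Proof. intros. apply inf_glb. intros y [-> | ->]; auto. Qed.

Lemma meetC a b : meet a b = meet b a.
Proof. apply le_antisym; apply meet_glb; (apply meet_l || apply meet_r). Qed.

Lemma meet_idPl a b : le a b -> meet a b = a.
Proof.
  intros. apply le_antisym; [apply meet_l | apply meet_glb; auto using le_refl].
Qed.

Lemma join_l a b : le a (join a b).
Proof. apply sup_ub. auto. Qed.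

Lemma join_r a b : le b (join a b).
Proof. apply sup_ub. auto. Qed.

Lemma join_lub x a b : le a x -> le b x -> le (join a b) x.
Proof. intros. apply sup_least. intros y [-> | ->]; auto. Qed.

Lemma le_top x : le x (top L).
Proof. apply sup_ub. trivial. Qed.

Lemma top_le_eq x : le (top L) x -> x = top L.
Proof. intros. apply le_antisym; auto using le_top. Qed.

End CompleteLattice.

Section Frame.
Context {L : cLattice}.
Hypothesis HL : is_frame L.
Implicit Types (a b c x y : L) (A B : pset L).

Lemma meet_join_le a b c x :
  le (meet a c) x -> le (meet b c) x -> le (meet (join a b) c) x.
Proof.
  intros Ha Hb. unfold join. rewrite HL. apply sup_least.
  intros z [y [[-> | ->] ->]]; assumption.
Qed.

Lemma imp_adj x a b : le x (imp a b) <-> le (meet x a) b.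
Proof.
  split.
  - intros H. apply le_trans with (meet (imp a b) a).
    + apply meet_glb; [apply le_trans with x; [apply meet_l | exact H] | apply meet_r].
    + unfold imp. rewrite HL. apply sup_least. intros z [y [Hy ->]]. exact Hy.
  - intros H. apply sup_ub, H.
Qed.

Lemma imp_meet_le a b : le (meet (imp a b) a) b.
Proof. apply imp_adj, le_refl. Qed.

Lemma opn_imp_id a y : opn a y -> imp a y = y.
Proof.
  intros [b ->]. apply le_antisym.
  - apply imp_adj. apply le_trans with (meet (imp a b) a); [|apply imp_meet_le].
    apply meet_glb; [apply imp_meet_le | apply meet_r].
  - apply imp_adj, meet_l.
Qed.

Lemma opn_inf a A : subset A (opn a) -> opn a (inf A).
Proof.
  intros HA. exists (inf A). apply le_antisym.
  - apply imp_adj, meet_l.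
  - apply inf_glb. intros y Hy. rewrite <- (opn_imp_id _ _ (HA y Hy)).
    apply imp_adj. apply le_trans with (inf A); [apply imp_meet_le | apply inf_lb, Hy].
Qed.

(* [b \/ a = 1] gives [x <= (b /\ x) \/ (a /\ x)], and both joinands lie below [x] or [a -> x]. *)
Lemma cls_sub_opn a b : subset (cls b) (opn a) <-> join b a = top L.
Proof.
  split.
  - intros H. destruct (H (join b a) (join_l b a)) as [c Hc].
    assert (Hac : le a c).
    { rewrite <- (meet_idPl _ _ (le_refl _ a)). apply imp_adj. rewrite <- Hc. apply join_r. }
    rewrite Hc. apply top_le_eq, imp_adj. apply le_trans with a; [apply meet_r | exact Hac].
  - intros Hj x Hx. exists x. apply le_antisym; [apply imp_adj, meet_l |].
    apply le_trans with (meet (join b a) (imp a x)).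
    + apply meet_glb; [rewrite Hj; apply le_top | apply le_refl].
    + apply meet_join_le.
      * apply le_trans with b; [apply meet_l | exact Hx].
      * rewrite meetC. apply imp_meet_le.
Qed.

Lemma join_meet_top x y a :
  join x a = top L -> join y a = top L -> join (meet x y) a = top L.
Proof.
  intros Hx Hy. apply top_le_eq. rewrite <- Hx. apply join_lub; [|apply join_r].
  apply le_trans with (meet (join y a) x).
  - apply meet_glb; [rewrite Hy; apply le_top | apply le_refl].
  - apply meet_join_le.
    + rewrite meetC. apply join_l.
    + apply le_trans with a; [apply meet_l | apply join_r].
Qed.

(* The join in [Sl(L)] of the closed sublocales [c(b)], [b] in [B]. *)
Definition cls_join B : pset L :=
  fun x => exists A, subset A (fun y => exists b, B b /\ cls b y) /\ x = inf A.

Definition annihilator B : pset L := fun x => forall b, B b -> join b x = top L.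

Lemma mu_cls_join B : mu (cls_join B) = annihilator B.
Proof.
  apply pset_ext. intros a. split.
  - intros H b Hb. apply cls_sub_opn. intros x Hx. apply H.
    exists (fun y => y = x). split.
    + intros y ->. exists b. auto.
    + symmetry. apply inf_singleton.
  - intros H x [A [HA ->]]. apply opn_inf. intros y Hy.
    destruct (HA y Hy) as [b [Hb Hby]]. apply (cls_sub_opn a b), Hby. apply H, Hb.
Qed.

Lemma annihilator_regular B : regular (annihilator B).
Proof.
  exists (fun x => forall a, annihilator B a -> join x a = top L). split.
  - split; [|split].
    + exists (top L). intros a _. apply top_le_eq, join_l.
    + intros x y Hx Hxy a Ha. apply top_le_eq. rewrite <- (Hx a Ha).
      apply join_lub; [apply le_trans with y; [exact Hxy | apply join_l] | apply join_r].
    + intros x y Hx Hy a Ha. apply join_meet_top; auto.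
  - apply pset_ext. intros x. split.
    + intros Hx g Hg. apply Hg, Hx.
    + intros Hx b Hb. apply Hx. intros a Ha. apply Ha, Hb.
Qed.

Lemma regular_annihilator F : regular F -> exists B, F = annihilator B.
Proof. intros [G [_ HF]]. exists G. exact HF. Qed.

Lemma Sc_cls_join S : Sc S -> exists B, S = cls_join B.
Proof. intros [B HS]. exists B. exact HS. Qed.

End Frame.

Theorem mainTheorem13 (L : cLattice) (HL : is_frame L) :
  (forall F : pset L, regular F -> FitSc (nu F)) /\
  (forall T : pset L, FitSc T -> regular (mu T)) /\
  (forall F : pset L, regular F -> mu (nu F) = F) /\
  (forall T : pset L, FitSc T -> nu (mu T) = T) /\
  (forall F G : pset L, regular F -> regular G ->
     (fle F G <-> subset (nu F) (nu G))).
Proof.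
  assert (mu_nu_regular : forall F : pset L, regular F -> mu (nu F) = F).
  { intros F HF. destruct (regular_annihilator _ HF) as [B ->].
    rewrite <- (mu_cls_join HL). apply mu_nu_mu. }
  split; [|split; [|split; [exact mu_nu_regular | split]]].
  - intros F HF. destruct (regular_annihilator _ HF) as [B ->].
    exists (cls_join B). split; [exists B; reflexivity |].
    rewrite fit_nu_mu, (mu_cls_join HL). reflexivity.
  - intros T [S [HS ->]]. destruct (Sc_cls_join _ HS) as [B ->].
    rewrite fit_nu_mu, mu_nu_mu, (mu_cls_join HL). apply annihilator_regular, HL.
  - intros T [S [_ ->]]. rewrite fit_nu_mu. apply nu_mu_nu.
  - intros F G HF HG. split.
    + apply nu_antitone.
    + intros H. rewrite <- (mu_nu_regular F HF), <- (mu_nu_regular G HG).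
      apply mu_antitone, H.
Qed.
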